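(* Let $\mathbf{C}=\mathbf{R}^+\times\mathrm{SO}(2)$ (nonzero complex numbers $re^{i\theta}$ identified with $(r,R(\theta))$), with distance $d\big((r_1,R_1),(r_2,R_2)\big)=\sqrt{\log^2(r_1^{-1}r_2)+\|\operatorname{logm}(R_1^{-1}R_2)\|_F^2}$, and let $G=(\mathbf{R}\setminus\{0\})\times\mathrm{SO}(2)$ act on $\mathbf{C}$ by $(r_g,R_g).(r,R)=(r_g^2r,R_gR)$. For points $\mathbf{z}_1,\dots,\mathbf{z}_K\in\mathbf{C}$ and weights $w_1,\dots,w_K\in(0,1]$ with $\sum_i w_i=1$, define the weighted Fréchet mean $$\mathrm{wFM}(\{\mathbf{z}_i\},\{w_i\})=\operatorname{argmin}_{\mathbf{m}\in\mathbf{C}}\sum_{i=1}^K w_i\, d^2(\mathbf{z}_i,\mathbf{m}).$$ Then $\mathrm{wFM}$ is equivariant to the action of $G$: for every $g\in G$, $\mathrm{wFM}(\{g.\mathbf{z}_i\},\{w_i\})=g.\,\mathrm{wFM}(\{\mathbf{z}_i\},\{w_i\})$, i.e. $\mathbf{m}$ is a minimizer for $\{\mathbf{z}_i\}$ if and only if $g.\mathbf{m}$ is a minimizer for $\{g.\mathbf{z}_i\}$.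
   Context: $R(\theta)=\begin{bmatrix}\cos\theta & -\sin\theta\\ \sin\theta & \cos\theta\end{bmatrix}$, $\theta\in[-\pi,\pi]$; for $A=R(\theta)$, $\operatorname{logm}(A)=\theta\begin{bmatrix}0&1\\-1&0\end{bmatrix}$; $\|\cdot\|_F$ is the Frobenius norm. *)

From HB Require Import structures.
From mathcomp Require Import all_boot all_order all_algebra.
From mathcomp Require Import all_classical all_reals all_analysis.
Set Implicit Arguments. Unset Strict Implicit. Unset Printing Implicit Defensive.
Import Order.TTheory GRing.Theory Num.Theory.
Local Open Scope ring_scope.
Local Open Scope classical_set_scope.

Section Defs.
Variable R : realType.

Definition rot (t : R) : 'M[R]_2 :=
  \matrix_(i < 2, j < 2)
    if i == 0 :> nat then (if j == 0 :> nat then cos t else - sin t)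
    else (if j == 0 :> nat then sin t else cos t).

Definition SO2 : set 'M[R]_2 := [set A | A^T *m A = 1%:M /\ \det A = 1].

Definition Jmx : 'M[R]_2 :=
  \matrix_(i < 2, j < 2)
    if i == 0 :> nat then (if j == 0 :> nat then 0 else 1)
    else (if j == 0 :> nat then -1 else 0).

(* angle theta in [-pi,pi] with A = R(theta) (chosen; unique up to +-pi) *)
Definition rot_angle (A : 'M[R]_2) : R :=
  xget 0 [set t : R | -pi <= t <= pi /\ rot t = A].

Definition logm (A : 'M[R]_2) : 'M[R]_2 := rot_angle A *: Jmx.

Definition frob (A : 'M[R]_2) : R :=
  Num.sqrt (\sum_(i < 2) \sum_(j < 2) (A i j) ^+ 2).

Definition Cpt (z : R * 'M[R]_2) : Prop := 0 < z.1 /\ SO2 z.2.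

Definition dist (z1 z2 : R * 'M[R]_2) : R :=
  Num.sqrt ((ln (z1.1^-1 * z2.1)) ^+ 2 + (frob (logm (invmx z1.2 *m z2.2))) ^+ 2).

Definition Gpt (g : R * 'M[R]_2) : Prop := g.1 != 0 /\ SO2 g.2.

Definition act (g z : R * 'M[R]_2) : R * 'M[R]_2 := (g.1 ^+ 2 * z.1, g.2 *m z.2).

Definition is_wFM (K : nat) (z : 'I_K -> R * 'M[R]_2) (w : 'I_K -> R)
  (m : R * 'M[R]_2) : Prop :=
  Cpt m /\ forall m', Cpt m' ->
    \sum_(i < K) w i * dist (z i) m ^+ 2 <= \sum_(i < K) w i * dist (z i) m' ^+ 2.

End Defs.

From HB Require Import structures.
From mathcomp Require Import all_boot all_order all_algebra.
From mathcomp Require Import all_classical all_reals all_analysis.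
Import Order.TTheory GRing.Theory Num.Theory.
Local Open Scope ring_scope.

(* The action of g is an isometry of d: the factor g.1^2 cancels in r1^-1 r2
   and the rotation g.2 cancels in R1^-1 R2.  It is also a bijection of C,
   with inverse the action of (g.1^-1, g.2^T), so it maps the minimizers of
   the weighted cost for {z_i} exactly onto those for {g.z_i}. *)

Section SO2.
Set Implicit Arguments.
Context {R : realType}.
Implicit Types A B : 'M[R]_2.

Lemma SO2_unit A : SO2 A -> A \in unitmx.
Proof. by case=> _ detA; rewrite unitmxE detA unitr1. Qed.

Lemma SO2M A B : SO2 A -> SO2 B -> SO2 (A *m B).
Proof.
case=> orthA detA [orthB detB]; split; last by rewrite det_mulmx detA detB mulr1.
by rewrite trmx_mul mulmxA -(mulmxA B^T) orthA mulmx1 orthB.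
Qed.

Lemma SO2_tr A : SO2 A -> SO2 A^T.
Proof. by case=> orthA detA; split; [rewrite trmxK; apply: mulmx1C | rewrite det_tr]. Qed.

End SO2.

Section Action.
Set Implicit Arguments.
Context {R : realType}.
Implicit Types g z m : R * 'M[R]_2.

Definition Ginv g : R * 'M[R]_2 := (g.1^-1, g.2^T).

Lemma GinvK : involutive Ginv.
Proof. by case=> a A; rewrite /Ginv /= invrK trmxK. Qed.

Lemma Gpt_inv g : Gpt g -> Gpt (Ginv g).
Proof. by case=> g1_neq0 g2_SO2; split; [rewrite invr_eq0 | apply: SO2_tr]. Qed.

Lemma actK g : Gpt g -> cancel (act g) (act (Ginv g)).
Proof.
case=> g1_neq0 [orth_g2 _] m; rewrite /act /Ginv /=.
by rewrite mulrA -exprMn mulVf // expr1n mul1r mulmxA orth_g2 mul1mx -surjective_pairing.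
Qed.

Lemma actVK g : Gpt g -> cancel (act (Ginv g)) (act g).
Proof. by move=> Gg; rewrite -{2}(GinvK g); apply/actK/Gpt_inv. Qed.

Lemma Cpt_act g m : Gpt g -> Cpt m -> Cpt (act g m).
Proof.
case=> g1_neq0 g2_SO2 [m1_gt0 m2_SO2]; split; last exact: SO2M.
by rewrite /= mulr_gt0 // exprn_even_gt0.
Qed.

Lemma dist_act g z m : Gpt g -> Cpt z -> dist (act g z) (act g m) = dist z m.
Proof.
case=> g1_neq0 g2_SO2 [_ z2_SO2]; rewrite /dist /act /=.
have -> : (g.1 ^+ 2 * z.1)^-1 * (g.1 ^+ 2 * m.1) = z.1^-1 * m.1.
  by rewrite invfM -mulrA mulrCA mulKf // expf_neq0.
have -> : g.2 *m m.2 = (g.2 *m z.2) *m (invmx z.2 *m m.2).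
  by rewrite -mulmxA (mulmxA z.2) mulmxV ?mul1mx //; apply: SO2_unit.
by rewrite mulKmx //; apply/SO2_unit/SO2M.
Qed.

Lemma is_wFM_act K (z : 'I_K -> R * 'M[R]_2) (w : 'I_K -> R) g m :
  Gpt g -> (forall i, Cpt (z i)) ->
  is_wFM z w m -> is_wFM (fun i => act g (z i)) w (act g m).
Proof.
move=> Gg Cz [Cm m_min]; split; first exact: Cpt_act.
move=> m' Cm'; rewrite -(actVK Gg m').
under eq_bigr => i _ do rewrite dist_act //.
under [X in _ <= X]eq_bigr => i _ do rewrite dist_act //.
by apply/m_min/Cpt_act => //; apply: Gpt_inv.
Qed.

End Action.

Theorem proposition3 (R : realType) (K : nat) (z : 'I_K -> R * 'M[R]_2)
  (w : 'I_K -> R) :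
  (forall i, Cpt (z i)) ->
  (forall i, 0 < w i <= 1) ->
  \sum_(i < K) w i = 1 ->
  forall g : R * 'M[R]_2, Gpt g ->
  forall m : R * 'M[R]_2,
    is_wFM z w m <-> is_wFM (fun i => act g (z i)) w (act g m).
Proof.
move=> Cz _ _ g Gg m; split; first exact: is_wFM_act.
have gCz i : Cpt (act g (z i)) by exact: Cpt_act.
move=> /(is_wFM_act (Gpt_inv Gg) gCz).
by rewrite actK //; under eq_fun => i do rewrite actK //.
Qed.
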